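(* Let $(X,d,\kappa)$ be a digital metric space of finite diameter, where $d$ is any $\ell_p$ metric. Let $f: X \to X$ be a function. If $f$ is a Kannan contraction map with constant $\alpha$, or a Chatterjea contraction map with constant $\alpha$, where $0 < \alpha < \frac{1}{2\,\mathrm{diam}\, X}$, then $f$ is a constant function.
   Context: A digital metric space is a triple $(X,d,\kappa)$ with $X\subset\mathbb{Z}^n$, $\kappa$ an adjacency relation on $X$, and $d$ a metric on $X$. The $\ell_p$ metric ($1\le p\le\infty$) is $d(x,y) = (\sum_i |x_i-y_i|^p)^{1/p}$ for $p<\infty$ and $\max_i|x_i-y_i|$ for $p=\infty$. $\mathrm{diam}\, X = \max\{d(x,y) : x,y\in X\}$. $f$ is a Kannan contraction map with constant $\alpha \in (0,1/2)$ if $d(f(x),f(y)) \le \alpha[d(x,f(x)) + d(y,f(y))]$ for all $x,y \in X$. $f$ is a Chatterjea contraction map with constant $\alpha \in (0,1/2)$ if $d(f(x),f(y)) \le \alpha[d(x,f(y)) + d(y,f(x))]$ for all $x,y\in X$. *)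

From HB Require Import structures.
From mathcomp Require Import all_boot all_order all_algebra.
From mathcomp Require Import all_classical all_reals exp.
Set Implicit Arguments. Unset Strict Implicit. Unset Printing Implicit Defensive.
Import Order.TTheory GRing.Theory Num.Theory.
Local Open Scope ring_scope.
Local Open Scope classical_set_scope.

Definition zpoint (n : nat) := 'I_n -> int.

(* The exponent p of an l_p metric: [Some p] is a finite p (with 1 <= p),
   [None] is p = infinity. *)
Definition lp_exponent_ok (R : realType) (p : option R) : Prop :=
  match p with Some q => 1 <= q | None => True end.

Definition lp_dist (R : realType) (n : nat) (p : option R) (x y : zpoint n) : R :=
  match p with
  | Some q => (\sum_(i < n) `|((x i - y i)%:~R : R)| `^ q) `^ q^-1
  | None => \big[Num.max/0]_(i < n) `|((x i - y i)%:~R : R)|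
  end.

Definition finite_diam (T : Type) (R : realType) (X : set T) (d : T -> T -> R) : Prop :=
  exists M : R, forall x y, X x -> X y -> d x y <= M.

(* diam X = max { d x y : x, y in X } (taken as the supremum, which is attained
   when the diameter is finite since X is then a finite subset of Z^n). *)
Definition diam (T : Type) (R : realType) (X : set T) (d : T -> T -> R) : R :=
  sup [set d x y | x in X & y in X].

Definition kannan_contraction (T : Type) (R : realType) (X : set T)
    (d : T -> T -> R) (f : T -> T) (alpha : R) : Prop :=
  0 < alpha < 2^-1 /\
  forall x y, X x -> X y -> d (f x) (f y) <= alpha * (d x (f x) + d y (f y)).

Definition chatterjea_contraction (T : Type) (R : realType) (X : set T)
    (d : T -> T -> R) (f : T -> T) (alpha : R) : Prop :=
  0 < alpha < 2^-1 /\
  forall x y, X x -> X y -> d (f x) (f y) <= alpha * (d x (f y) + d y (f x)).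

From HB Require Import structures.
From mathcomp Require Import all_boot all_order all_algebra.
From mathcomp Require Import all_classical all_reals exp.
Set Implicit Arguments. Unset Strict Implicit. Unset Printing Implicit Defensive.
Import Order.TTheory GRing.Theory Num.Theory.
Local Open Scope ring_scope.
Local Open Scope classical_set_scope.

(* Either contraction condition bounds d(f x, f y) by alpha times a sum of two
   distances in X, hence by 2 alpha diam X < 1.  But every l_p norm dominates
   each coordinate, so distinct points of Z^n are at distance at least 1. *)

Lemma lp_dist_ge_coord (R : realType) (n : nat) (p : option R) (u v : zpoint n)
    (i : 'I_n) :
  lp_exponent_ok p -> `|((u i - v i)%:~R : R)| <= lp_dist p u v.
Proof.
case: p => [q|] /= hq; last exact: le_bigmax.
have q_gt0 : 0 < q := lt_le_trans ltr01 hq.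
have qV_ge0 : 0 <= q^-1 by rewrite invr_ge0 (ltW q_gt0).
set a := `|_|; have a_ge0 : 0 <= a := normr_ge0 _.
have sum_ge0 : 0 <= \sum_(j < n) `|((u j - v j)%:~R : R)| `^ q.
  by apply: sumr_ge0 => j _; exact: powR_ge0.
have le_sum : a `^ q <= \sum_(j < n) `|((u j - v j)%:~R : R)| `^ q.
  rewrite (bigD1 i) //= lerDl.
  by apply: sumr_ge0 => j _; exact: powR_ge0.
have -> : a = (a `^ q) `^ q^-1 by rewrite -powRrM mulfV ?powRr1 ?gt_eqF.
by apply: ge0_ler_powR; rewrite ?nnegrE ?powR_ge0.
Qed.

Lemma lp_dist_lt1_eq (R : realType) (n : nat) (p : option R) (u v : zpoint n) :
  lp_exponent_ok p -> lp_dist p u v < 1 -> u = v.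
Proof.
move=> hp uv_lt1; apply: boolp.funext => i; apply/eqP.
apply: contraLR uv_lt1 => neq_uv; rewrite -leNgt.
apply: le_trans (lp_dist_ge_coord u v i hp).
by rewrite -intr_norm ler1z -gtz0_ge1 normr_gt0 subr_eq0.
Qed.

Lemma le_diam (T : Type) (R : realType) (X : set T) (d : T -> T -> R) (x y : T) :
  finite_diam X d -> X x -> X y -> d x y <= diam X d.
Proof.
move=> [M leM] Xx Xy; apply: ub_le_sup; last by exists x => //; exists y.
by exists M => _ [a Xa [b Xb <-]]; exact: leM.
Qed.

Lemma mul_sum_le_lt1 (R : realFieldType) (alpha D a b : R) :
  0 < alpha -> alpha < (2 * D)^-1 -> a <= D -> b <= D -> alpha * (a + b) < 1.
Proof.
move=> alpha_gt0 alpha_lt aD bD.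
have D2_gt0 : 0 < 2 * D by rewrite -invr_gt0; exact: lt_trans alpha_lt.
apply: le_lt_trans (ler_wpM2l (ltW alpha_gt0) (lerD aD bD)) _.
by rewrite -mulr2n -mulr_natl -ltr_pdivlMr // div1r.
Qed.

Section SmallContraction.

Variables (T : Type) (R : realType) (X : set T) (d : T -> T -> R).
Variables (f : T -> T) (alpha : R).
Hypothesis X_bounded : finite_diam X d.
Hypothesis fX : forall x, X x -> X (f x).
Hypothesis alpha_small : alpha < (2 * diam X d)^-1.

Lemma kannan_dist_lt1 x y : kannan_contraction X d f alpha ->
  X x -> X y -> d (f x) (f y) < 1.
Proof.
move=> [/andP[alpha_gt0 _] kannan] Xx Xy.
apply: le_lt_trans (kannan _ _ Xx Xy) _.
apply: (mul_sum_le_lt1 alpha_gt0 alpha_small);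
  by apply: le_diam => //; exact: fX.
Qed.

Lemma chatterjea_dist_lt1 x y : chatterjea_contraction X d f alpha ->
  X x -> X y -> d (f x) (f y) < 1.
Proof.
move=> [/andP[alpha_gt0 _] chatterjea] Xx Xy.
apply: le_lt_trans (chatterjea _ _ Xx Xy) _.
apply: (mul_sum_le_lt1 alpha_gt0 alpha_small);
  by apply: le_diam => //; exact: fX.
Qed.

End SmallContraction.

Theorem mainTheorem6 (R : realType) (n : nat) (X : set (zpoint n))
    (kappa : rel (zpoint n)) (p : option R) (f : zpoint n -> zpoint n) (alpha : R) :
  lp_exponent_ok p ->
  finite_diam X (lp_dist p) ->
  (forall x, X x -> X (f x)) ->
  (kannan_contraction X (lp_dist p) f alpha \/
   chatterjea_contraction X (lp_dist p) f alpha) ->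
  0 < alpha < (2 * diam X (lp_dist p))^-1 ->
  forall x y, X x -> X y -> f x = f y.
Proof.
move=> hp X_bounded fX contraction /andP[_ alpha_small] x y Xx Xy.
have fxy_lt1 : lp_dist p (f x) (f y) < 1.
  case: contraction => [kannan|chatterjea].
  - exact: (kannan_dist_lt1 X_bounded fX alpha_small kannan Xx Xy).
  - exact: (chatterjea_dist_lt1 X_bounded fX alpha_small chatterjea Xx Xy).
exact: lp_dist_lt1_eq hp fxy_lt1.
Qed.
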